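(* For every group $H$, the nullification functor $P_H$ in the category of groups is conditionally flat.
   Context: For a group homomorphism $\varphi\colon A\to B$, a group $M$ is $\varphi$-local if $\mathrm{Hom}(B,M)\to\mathrm{Hom}(A,M)$ is a bijection; the localization functor $L_\varphi$ assigns to each group $G$ a $\varphi$-local group $L_\varphi G$ with a natural homomorphism $G\to L_\varphi G$ initial among homomorphisms to $\varphi$-local groups. The nullification $P_H$ is $L_\varphi$ for $\varphi\colon H\to\{e\}$. For a functor $L$ on groups, a group extension $1\to N\to E\to Q\to 1$ is $L$-flat if $1\to LN\to LE\to LQ\to 1$ is again a short exact sequence; $L$ is conditionally flat if for every $L$-flat extension $1\to N\to E\to Q\to 1$ and every homomorphism $Q'\to Q$, the pullback extension $1\to N\to E\times_Q Q'\to Q'\to 1$ is $L$-flat. *)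

From Stdlib Require Import ProofIrrelevance.
Set Implicit Arguments.

Record group := Group {
  car :> Type;
  mul : car -> car -> car;
  one : car;
  inv : car -> car;
  mulA : forall x y z, mul x (mul y z) = mul (mul x y) z;
  mul1g : forall x, mul one x = x;
  mulVg : forall x, mul (inv x) x = one
}.
Arguments mul {g} _ _.
Arguments one {g}.
Arguments inv {g} _.
Arguments mulA {g} x y z.
Arguments mul1g {g} x.
Arguments mulVg {g} x.

Record hom (G K : group) := Hom {
  hfun :> G -> K;
  hmulP : forall x y, hfun (mul x y) = mul (hfun x) (hfun y)
}.

Lemma mulgV {G : group} (x : G) : mul x (inv x) = one.
Proof.
  set (y := inv x).
  transitivity (mul (mul (inv y) y) (mul x y)).
  { rewrite mulVg, mul1g. reflexivity. }
  rewrite <- mulA, (mulA y x y). unfold y at 2. rewrite mulVg, mul1g.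
  apply mulVg.
Qed.

Lemma mulg1 {G : group} (x : G) : mul x one = x.
Proof. rewrite <- (mulVg x), mulA, mulgV. apply mul1g. Qed.

Lemma hom1 {G K : group} (f : hom G K) : f one = one.
Proof.
  assert (E : f one = mul (f one) (f one)) by (rewrite <- hmulP, mul1g; reflexivity).
  transitivity (mul (mul (inv (f one)) (f one)) (f one)).
  { rewrite mulVg, mul1g. reflexivity. }
  rewrite <- mulA, <- E. apply mulVg.
Qed.

Lemma homV (G K : group) (f : hom G K) (x : G) : f (inv x) = inv (f x).
Proof.
  rewrite <- (mulg1 (f (inv x))), <- (mulgV (f x)), mulA, <- hmulP, mulVg, hom1.
  apply mul1g.
Qed.

Definition hom_eq (G K : group) (f g : hom G K) : Prop := forall x, f x = g x.

Definition triv_group : group :=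
  @Group unit (fun _ _ => tt) tt (fun _ => tt)
    (fun _ _ _ => eq_refl) (fun x => match x with tt => eq_refl end) (fun _ => eq_refl).

Definition to_triv (H : group) : hom H triv_group :=
  @Hom H triv_group (fun _ => tt) (fun _ _ => eq_refl).

(** M is phi-local: Hom(B,M) -> Hom(A,M), g |-> g o phi, is a bijection
    (homomorphisms being compared extensionally). *)
Definition local (A B : group) (phi : hom A B) (M : group) : Prop :=
  (forall g1 g2 : hom B M, (forall a, g1 (phi a) = g2 (phi a)) -> hom_eq g1 g2) /\
  (forall f : hom A M, exists g : hom B M, forall a, g (phi a) = f a).

Definition is_localization (A B : group) (phi : hom A B)
    (G LG : group) (eta : hom G LG) : Prop :=
  local phi LG /\
  forall M : group, local phi M ->
    forall f : hom G M,
      exists g : hom LG M,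
        (forall x, g (eta x) = f x) /\
        (forall g' : hom LG M, (forall x, g' (eta x) = f x) -> hom_eq g' g).

Definition is_nullification (H : group) : forall G LG : group, hom G LG -> Prop :=
  @is_localization H triv_group (to_triv H).

Definition short_exact (N E Q : group) (i : hom N E) (p : hom E Q) : Prop :=
  (forall x y, i x = i y -> x = y) /\
  (forall q, exists e, p e = q) /\
  (forall e, p e = one <-> exists n, i n = e).

Lemma short_exact_comp (N E Q : group) (i : hom N E) (p : hom E Q) :
  short_exact i p -> forall n, p (i n) = one.
Proof. intros [_ [_ H]] n. apply H. exists n; reflexivity. Qed.

(** * Flatness for a localization-type functor L, given by the predicate
    [Lz G LG eta] ("eta : G -> LG is the L-localization of G").  The functor
    acts on a morphism f : G -> K by the unique a : LG -> LK with
    a o etaG = etaK o f. *)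
Definition L_flat (Lz : forall G LG : group, hom G LG -> Prop)
    (N E Q : group) (i : hom N E) (p : hom E Q) : Prop :=
  forall (LN LE LQ : group) (etaN : hom N LN) (etaE : hom E LE) (etaQ : hom Q LQ),
    Lz N LN etaN -> Lz E LE etaE -> Lz Q LQ etaQ ->
    forall (a : hom LN LE) (b : hom LE LQ),
      (forall x, a (etaN x) = etaE (i x)) ->
      (forall x, b (etaE x) = etaQ (p x)) ->
      short_exact a b.

Section Pullback.
Variables (E Q Q' : group) (p : hom E Q) (f : hom Q' Q).

Definition pb_car : Type := { x : E * Q' | p (fst x) = f (snd x) }.

Lemma pb_mul_proof (x y : pb_car) :
  p (fst (mul (fst (proj1_sig x)) (fst (proj1_sig y)), mul (snd (proj1_sig x)) (snd (proj1_sig y))))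
  = f (snd (mul (fst (proj1_sig x)) (fst (proj1_sig y)), mul (snd (proj1_sig x)) (snd (proj1_sig y)))).
Proof.
  destruct x as [[e1 q1] h1], y as [[e2 q2] h2]; simpl in *.
  rewrite !hmulP, h1, h2. reflexivity.
Qed.

Definition pb_mul (x y : pb_car) : pb_car :=
  exist _ _ (pb_mul_proof x y).

Lemma pb_one_proof : p (fst ((one : E), (one : Q'))) = f (snd ((one : E), (one : Q'))).
Proof. simpl. rewrite !hom1. reflexivity. Qed.

Definition pb_one : pb_car := exist _ _ pb_one_proof.

Lemma pb_inv_proof (x : pb_car) :
  p (fst (inv (fst (proj1_sig x)), inv (snd (proj1_sig x))))
  = f (snd (inv (fst (proj1_sig x)), inv (snd (proj1_sig x)))).
Proof.
  destruct x as [[e q] h]; simpl in *. rewrite !homV, h. reflexivity.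
Qed.

Definition pb_inv (x : pb_car) : pb_car := exist _ _ (pb_inv_proof x).

Lemma pb_ext (x y : pb_car) : proj1_sig x = proj1_sig y -> x = y.
Proof.
  destruct x as [x hx], y as [y hy]; simpl. intros ->.
  f_equal. apply proof_irrelevance.
Qed.

Lemma pb_mulA x y z : pb_mul x (pb_mul y z) = pb_mul (pb_mul x y) z.
Proof. apply pb_ext; simpl. rewrite !mulA. reflexivity. Qed.

Lemma pb_mul1g x : pb_mul pb_one x = x.
Proof. apply pb_ext; destruct x as [[e q] h]; simpl. rewrite !mul1g. reflexivity. Qed.

Lemma pb_mulVg x : pb_mul (pb_inv x) x = pb_one.
Proof. apply pb_ext; destruct x as [[e q] h]; simpl. rewrite !mulVg. reflexivity. Qed.

Definition pullback : group := @Group pb_car pb_mul pb_one pb_inv pb_mulA pb_mul1g pb_mulVg.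

Definition pb_proj : hom pullback Q' :=
  @Hom pullback Q' (fun x => snd (proj1_sig x)) (fun _ _ => eq_refl).

Variables (N : group) (i : hom N E) (hi : forall n, p (i n) = one).

Lemma pb_in_proof (n : N) : p (fst (i n, (one : Q'))) = f (snd (i n, (one : Q'))).
Proof. simpl. rewrite hi, hom1. reflexivity. Qed.

Definition pb_in_fun (n : N) : pullback := exist _ _ (pb_in_proof n).

Lemma pb_in_mul (x y : N) : pb_in_fun (mul x y) = mul (pb_in_fun x) (pb_in_fun y).
Proof. apply pb_ext; simpl. rewrite hmulP, mul1g. reflexivity. Qed.

Definition pb_in : hom N pullback := @Hom N pullback pb_in_fun pb_in_mul.
End Pullback.

Definition conditionally_flat (Lz : forall G LG : group, hom G LG -> Prop) : Prop :=
  forall (N E Q : group) (i : hom N E) (p : hom E Q) (ex : short_exact i p),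
    L_flat Lz i p ->
    forall (Q' : group) (f : hom Q' Q),
      L_flat Lz (pb_in p f i (short_exact_comp ex)) (pb_proj p f).

From Stdlib Require Import ProofIrrelevance ClassicalEpsilon FunctionalExtensionality PropExtensionality.

(** Write [killed x] for an element [x] of a group [G] that is sent to [1] by
    every homomorphism from [G] to an H-null group (a group receiving only
    trivial homomorphisms from [H]).  The killed elements form a normal
    subgroup, [G/killed] is a nullification of [G], and every nullification
    [eta : G -> P_H G] is surjective with kernel exactly the killed elements.
    Consequently an extension [N -i-> E -p-> Q] is [P_H]-flat iff
      (A) [killed (i n)] implies [killed n], and
      (B) [killed (p e)] implies that [e] is killed modulo [i N].
    For the pullback [E' = E x_Q Q'] along [f : Q' -> Q], (A) is inherited
    directly.  For (B) the key fact is that every killed element of [Q'] is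
    the image of a killed element of [E']: the quotient of [Q'] by the image
    [S] of the killed elements of [E'] is H-null, because any homomorphism
    [H -> Q'/S] lifts, by (A) and (B) for the original extension, to a
    homomorphism [H -> P_H E'], which is trivial. *)

Section GroupFacts.
Context {G : group}.

Lemma mulKg (x y : G) : mul (inv x) (mul x y) = y.
Proof. rewrite mulA, mulVg. apply mul1g. Qed.

Lemma mulKVg (x y : G) : mul x (mul (inv x) y) = y.
Proof. rewrite mulA, mulgV. apply mul1g. Qed.

Lemma inv_uniq (x y : G) : mul x y = one -> y = inv x.
Proof.
  intro E. rewrite <- (mulKg x y), E. apply mulg1.
Qed.

Lemma invK (x : G) : inv (inv x) = x.
Proof. symmetry. apply inv_uniq, mulVg. Qed.

Lemma invM (x y : G) : inv (mul x y) = mul (inv y) (inv x).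
Proof.
  symmetry. apply inv_uniq.
  rewrite <- mulA, (mulA y), mulgV, mul1g. apply mulgV.
Qed.

Lemma inv1 : inv (one : G) = one.
Proof. symmetry. apply inv_uniq, mul1g. Qed.

Lemma eq_div (x y : G) : x = y <-> mul (inv x) y = one.
Proof.
  split.
  - intros ->. apply mulVg.
  - intro E. apply inv_uniq in E. rewrite invK in E. symmetry; exact E.
Qed.
End GroupFacts.

Ltac group_simpl :=
  repeat rewrite <- mulA;
  repeat rewrite ?mulKVg, ?mulKg, ?mulgV, ?mulVg, ?mulg1, ?mul1g.

Definition hcomp {A B C : group} (f : hom A B) (g : hom B C) : hom A C.
Proof.
  refine (@Hom A C (fun x => g (f x)) _).
  intros x y. rewrite !hmulP. reflexivity.
Defined.

Definition hid (G : group) : hom G G := @Hom G G (fun x => x) (fun _ _ => eq_refl).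

Record normal_pred {G : group} (S : G -> Prop) : Prop := {
  ns1 : S one;
  nsM : forall x y, S x -> S y -> S (mul x y);
  nsV : forall x, S x -> S (inv x);
  nsJ : forall g x, S x -> S (mul (mul (inv g) x) g)
}.
Arguments ns1 {G S}. Arguments nsM {G S}. Arguments nsV {G S}. Arguments nsJ {G S}.

(** The quotient group [G/S]: its elements are the cosets [x S], viewed as
    predicates on [G]; operations are computed on chosen representatives. *)
Section Quotient.
Context {G : group} (S : G -> Prop) (HS : normal_pred S).

Definition coset (x : G) : G -> Prop := fun y => S (mul (inv x) y).
Definition quot_car : Type := { P : G -> Prop | exists x, P = coset x }.
Definition quot_in (x : G) : quot_car := exist _ (coset x) (ex_intro _ x eq_refl).
Definition quot_rep (P : quot_car) : G :=
  proj1_sig (constructive_indefinite_description _ (proj2_sig P)).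

Lemma quot_ext (P R : quot_car) : proj1_sig P = proj1_sig R -> P = R.
Proof. destruct P, R; simpl; intros ->; f_equal; apply proof_irrelevance. Qed.

Lemma quot_repK (P : quot_car) : quot_in (quot_rep P) = P.
Proof.
  apply quot_ext. unfold quot_rep.
  destruct (constructive_indefinite_description _ (proj2_sig P)) as [x hx].
  simpl. auto.
Qed.

Lemma quot_in_surj (P : quot_car) : exists x, P = quot_in x.
Proof. exists (quot_rep P). symmetry; apply quot_repK. Qed.

Lemma quot_in_eq (x y : G) : quot_in x = quot_in y <-> S (mul (inv x) y).
Proof.
  split.
  - intro E.
    assert (Ey : coset x y = coset y y)
      by (change (proj1_sig (quot_in x) y = proj1_sig (quot_in y) y); rewrite E; auto).
    unfold coset at 1 in Ey. rewrite Ey. unfold coset. rewrite mulVg. apply (ns1 HS).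
  - intro Sxy. apply quot_ext. simpl. unfold coset.
    apply functional_extensionality. intro z.
    apply propositional_extensionality. split; intro Sz.
    + replace (mul (inv y) z) with (mul (inv (mul (inv x) y)) (mul (inv x) z))
        by (rewrite invM, invK; group_simpl; reflexivity).
      apply (nsM HS); [apply (nsV HS)|]; assumption.
    + replace (mul (inv x) z) with (mul (mul (inv x) y) (mul (inv y) z))
        by (group_simpl; reflexivity).
      apply (nsM HS); assumption.
Qed.

Lemma quot_rep_in (x : G) : S (mul (inv (quot_rep (quot_in x))) x).
Proof. apply quot_in_eq, quot_repK. Qed.

Definition quot_mul (P R : quot_car) : quot_car := quot_in (mul (quot_rep P) (quot_rep R)).
Definition quot_inv (P : quot_car) : quot_car := quot_in (inv (quot_rep P)).

Lemma quot_mul_in (x y : G) : quot_mul (quot_in x) (quot_in y) = quot_in (mul x y).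
Proof.
  unfold quot_mul. apply quot_in_eq.
  pose proof (quot_rep_in x) as Sx. pose proof (quot_rep_in y) as Sy.
  set (x0 := quot_rep (quot_in x)) in *. set (y0 := quot_rep (quot_in y)) in *.
  replace (mul (inv (mul x0 y0)) (mul x y)) with
    (mul (mul (mul (inv y0) (mul (inv x0) x)) y0) (mul (inv y0) y))
    by (rewrite invM; group_simpl; reflexivity).
  apply (nsM HS); [apply (nsJ HS)|]; assumption.
Qed.

Lemma quot_inv_in (x : G) : quot_inv (quot_in x) = quot_in (inv x).
Proof.
  unfold quot_inv. apply quot_in_eq.
  pose proof (quot_rep_in x) as Sx. set (x0 := quot_rep (quot_in x)) in *.
  replace (mul (inv (inv x0)) (inv x)) with
    (mul (mul (inv (inv x0)) (inv (mul (inv x0) x))) (inv x0))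
    by (rewrite invM, !invK; group_simpl; reflexivity).
  apply (nsJ HS), (nsV HS), Sx.
Qed.

Lemma quot_mulA (P R T : quot_car) : quot_mul P (quot_mul R T) = quot_mul (quot_mul P R) T.
Proof.
  destruct (quot_in_surj P) as [x ->], (quot_in_surj R) as [y ->], (quot_in_surj T) as [z ->].
  rewrite !quot_mul_in, mulA. reflexivity.
Qed.

Lemma quot_mul1 (P : quot_car) : quot_mul (quot_in one) P = P.
Proof. destruct (quot_in_surj P) as [x ->]. rewrite quot_mul_in, mul1g. reflexivity. Qed.

Lemma quot_mulV (P : quot_car) : quot_mul (quot_inv P) P = quot_in one.
Proof.
  destruct (quot_in_surj P) as [x ->]. rewrite quot_inv_in, quot_mul_in, mulVg. reflexivity.
Qed.

Definition quot : group :=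
  @Group quot_car quot_mul (quot_in one) quot_inv quot_mulA quot_mul1 quot_mulV.

Definition quot_map : hom G quot :=
  @Hom G quot quot_in (fun x y => eq_sym (quot_mul_in x y)).

Lemma quot_map_ker (x : G) : quot_map x = one <-> S x.
Proof.
  change (quot_in x = quot_in one <-> S x). rewrite quot_in_eq, mulg1.
  split; intro Sx; [rewrite <- (invK x)|]; apply (nsV HS), Sx.
Qed.

Lemma quot_map_surj (P : quot) : exists x, quot_map x = P.
Proof. destruct (quot_in_surj P) as [x ->]. exists x. reflexivity. Qed.

Lemma quot_lift {M : group} (g : hom G M) :
  (forall x, S x -> g x = one) -> exists g' : hom quot M, forall x, g' (quot_map x) = g x.
Proof.
  intro gS.
  assert (g_rep : forall x, g (quot_rep (quot_in x)) = g x).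
  { intro x. apply eq_div. rewrite <- homV, <- hmulP. apply gS, quot_rep_in. }
  unshelve eexists (@Hom quot M (fun P => g (quot_rep P)) _).
  - intros P R. simpl. unfold quot_mul. rewrite g_rep, hmulP. reflexivity.
  - intro x. apply g_rep.
Qed.
End Quotient.

Section PullbackFacts.
Context {N E Q Q' : group} {i : hom N E} (p : hom E Q) (f : hom Q' Q).
Context (ex : short_exact i p).

Definition pb_fst : hom (pullback p f) E :=
  @Hom (pullback p f) E (fun w => fst (proj1_sig w)) (fun _ _ => eq_refl).

Lemma pb_square (w : pullback p f) : p (pb_fst w) = f (pb_proj p f w).
Proof. destruct w as [[e q] h]. exact h. Qed.

Lemma pb_proj_surj (z : Q') : exists w, pb_proj p f w = z.
Proof.
  destruct (proj1 (proj2 ex) (f z)) as [e He].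
  exists (exist _ (e, z) He). reflexivity.
Qed.

Lemma pb_ker_proj (w : pullback p f) :
  pb_proj p f w = one -> exists n, pb_in p f i (short_exact_comp ex) n = w.
Proof.
  destruct w as [[e q] h]. simpl. intros ->.
  assert (pe : p e = one) by (simpl in h; rewrite h; apply hom1).
  destruct (proj1 (proj2 (proj2 ex) e) pe) as [n Hn].
  exists n. apply pb_ext. simpl. rewrite Hn. reflexivity.
Qed.
End PullbackFacts.

Section Nullification.
Variable H : group.

Definition null (M : group) : Prop := forall (h : hom H M) a, h a = one.

Lemma local_null (M : group) : local (to_triv H) M <-> null M.
Proof.
  split.
  - intros [_ ext] h a. destruct (ext h) as [g Hg]. rewrite <- Hg. exact (hom1 g).
  - intro Mnull. split.
    + intros g1 g2 _ []. exact (eq_trans (hom1 g1) (eq_sym (hom1 g2))).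
    + intro h. exists (@Hom triv_group M (fun _ => one) (fun _ _ => eq_sym (mul1g one))).
      intro a. symmetry; apply Mnull.
Qed.

Definition killed {G : group} (x : G) : Prop :=
  forall M, null M -> forall g : hom G M, g x = one.

Lemma killed_hom {G K : group} (g : hom G K) {x : G} : killed x -> killed (g x).
Proof. intros Kx M Mnull g'. exact (Kx M Mnull (hcomp g g')). Qed.

Lemma killed_image_H {G : group} (h : hom H G) (a : H) : killed (h a).
Proof. intros M Mnull g. exact (Mnull (hcomp h g) a). Qed.

Lemma killed_normal (G : group) : normal_pred (@killed G).
Proof.
  split.
  - intros M Mnull g. apply hom1.
  - intros x y Kx Ky M Mnull g. rewrite hmulP, Kx, Ky by assumption. apply mul1g.
  - intros x Kx M Mnull g. rewrite homV, Kx by assumption. apply inv1.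
  - intros z x Kx M Mnull g. rewrite !hmulP, Kx by assumption. rewrite mulg1, homV. apply mulVg.
Qed.

Lemma killed_mul {G : group} (x y : G) : killed x -> killed y -> killed (mul x y).
Proof. apply (nsM (killed_normal G)). Qed.

Lemma killed_inv {G : group} (x : G) : killed x -> killed (inv x).
Proof. apply (nsV (killed_normal G)). Qed.

Definition nullify (G : group) : group := quot _ (killed_normal G).
Definition nullify_map (G : group) : hom G (nullify G) := quot_map _ (killed_normal G).

Lemma nullify_lift {G M : group} (g : hom G M) :
  null M -> exists g' : hom (nullify G) M, forall x, g' (nullify_map G x) = g x.
Proof. intro Mnull. apply quot_lift. intros x Kx. exact (Kx M Mnull g). Qed.

Lemma nullify_null (G : group) : null (nullify G).
Proof.
  intros h a. destruct (quot_map_surj _ (killed_normal G) (h a)) as [x Hx].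
  rewrite <- Hx. apply quot_map_ker. intros M Mnull g.
  destruct (nullify_lift g Mnull) as [g' Hg']. rewrite <- Hg'.
  change (g' (quot_map _ (killed_normal G) x) = one). rewrite Hx. exact (Mnull (hcomp h g') a).
Qed.

Lemma nullify_spec (G : group) : is_nullification H (nullify_map G).
Proof.
  split; [apply local_null, nullify_null|].
  intros M Mloc g. apply local_null in Mloc.
  destruct (nullify_lift g Mloc) as [g' Hg']. exists g'. split; [exact Hg'|].
  intros g'' Hg'' y. destruct (quot_map_surj _ _ y) as [x <-].
  change (g'' (nullify_map G x) = g' (nullify_map G x)). rewrite Hg'', Hg'. reflexivity.
Qed.

Section NullificationFacts.
Context {G LG : group} {eta : hom G LG} (HL : is_nullification H eta).

Lemma nullification_null : null LG.
Proof. apply local_null, HL. Qed.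

Lemma nullification_ker (x : G) : eta x = one <-> killed x.
Proof.
  split.
  - intros E M Mnull g.
    destruct (proj2 HL M (proj2 (local_null M) Mnull) g) as [g' [Hg' _]].
    rewrite <- Hg', E. apply hom1.
  - intro Kx. apply Kx, nullification_null.
Qed.

Lemma nullification_eq (x y : G) : eta x = eta y <-> killed (mul (inv x) y).
Proof. rewrite <- nullification_ker, hmulP, homV. apply eq_div. Qed.

(** Compare [eta] with [nullify_map G]: the two comparison maps compose to
    the identity of [LG], by uniqueness in the universal property of [eta]. *)
Lemma nullification_surj (y : LG) : exists x, eta x = y.
Proof.
  destruct (nullify_lift eta nullification_null) as [g Hg].
  destruct (proj2 HL _ (proj1 (nullify_spec G)) (nullify_map G)) as [g' [Hg' _]].
  destruct (proj2 HL LG (proj1 HL) eta) as [e [_ e_uniq]].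
  assert (Hy : y = g (g' y)).
  { transitivity (e y); [apply (e_uniq (hid LG)); reflexivity|].
    symmetry. apply (e_uniq (hcomp g' g)). intro x. simpl. rewrite Hg'. apply Hg. }
  destruct (quot_map_surj _ _ (g' y)) as [x Hx]. exists x.
  rewrite Hy, <- Hx. symmetry. apply Hg.
Qed.
End NullificationFacts.

Lemma nullification_map {G K LG LK : group} {etaG : hom G LG} {etaK : hom K LK} (f : hom G K) :
  is_nullification H etaG -> is_nullification H etaK ->
  exists a : hom LG LK, forall x, a (etaG x) = etaK (f x).
Proof.
  intros HG HK. destruct (proj2 HG LK (proj1 HK) (hcomp f etaK)) as [a [Ha _]].
  exists a. exact Ha.
Qed.

(** Elementwise form of [P_H]-flatness of [N -i-> E -p-> Q]:
    [reflects_killed i] is injectivity of [P_H i], and [lifts_killed i p]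
    is exactness of [P_H N -> P_H E -> P_H Q] at [P_H E]. *)
Definition reflects_killed {N E : group} (i : hom N E) : Prop :=
  forall n, killed (i n) -> killed n.

Definition lifts_killed {N E Q : group} (i : hom N E) (p : hom E Q) : Prop :=
  forall e, killed (p e) -> exists n, killed (mul (inv (i n)) e).

Section FlatnessCriterion.
Context {N E Q : group} {i : hom N E} {p : hom E Q}.

Lemma flat_conditions :
  L_flat (is_nullification H) i p -> reflects_killed i /\ lifts_killed i p.
Proof.
  intro flat.
  pose proof (nullify_spec N) as HN. pose proof (nullify_spec E) as HE.
  pose proof (nullify_spec Q) as HQ.
  destruct (nullification_map i HN HE) as [a Ha].
  destruct (nullification_map p HE HQ) as [b Hb].
  destruct (flat _ _ _ _ _ _ HN HE HQ a b Ha Hb) as [a_inj [_ b_exact]].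
  split.
  - intros n Kin. apply (nullification_ker HN). apply a_inj.
    rewrite Ha, (hom1 a). apply (nullification_ker HE), Kin.
  - intros e Kpe.
    assert (Hbe : b (nullify_map E e) = one)
      by (rewrite Hb; apply (nullification_ker HQ), Kpe).
    destruct (proj1 (b_exact _) Hbe) as [y Hy].
    destruct (nullification_surj HN y) as [n <-]. exists n.
    apply (nullification_eq HE). rewrite <- Hy, Ha. reflexivity.
Qed.

Lemma flat_of_conditions :
  (forall q, exists e, p e = q) -> (forall n, p (i n) = one) ->
  reflects_killed i -> lifts_killed i p -> L_flat (is_nullification H) i p.
Proof.
  intros p_surj p_i reflects lifts LN LE LQ etaN etaE etaQ HN HE HQ a b Ha Hb.
  split; [|split].
  - intros x y Exy.
    destruct (nullification_surj HN x) as [n <-], (nullification_surj HN y) as [m <-].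
    rewrite !Ha in Exy. apply (nullification_eq HE) in Exy.
    apply (nullification_eq HN), reflects.
    rewrite hmulP, homV. exact Exy.
  - intro z. destruct (nullification_surj HQ z) as [q <-], (p_surj q) as [e <-].
    exists (etaE e). apply Hb.
  - intro x. destruct (nullification_surj HE x) as [e <-]. rewrite Hb. split.
    + intro Hpe. apply (nullification_ker HQ), lifts in Hpe. destruct Hpe as [n Kn].
      exists (etaN n). rewrite Ha. apply (nullification_eq HE), Kn.
    + intros [y Hy]. destruct (nullification_surj HN y) as [n <-].
      rewrite Ha in Hy. rewrite <- Hb, <- Hy, Hb, p_i. apply hom1.
Qed.
End FlatnessCriterion.

Section PullbackKilled.
Context {N E Q Q' : group} {i : hom N E} {p : hom E Q} (f : hom Q' Q).
Context (ex : short_exact i p).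
Hypotheses (reflects : reflects_killed i) (lifts : lifts_killed i p).

Local Notation E' := (pullback p f).
Let i' : hom N E' := pb_in p f i (short_exact_comp ex).
Let pr : hom E' Q' := pb_proj p f.

Lemma pb_reflects_killed : reflects_killed i'.
Proof. intros n Kn. apply reflects. exact (killed_hom (pb_fst p f) Kn). Qed.

Definition killed_image (y : Q') : Prop := exists w : E', killed w /\ pr w = y.

Lemma killed_image_normal : normal_pred killed_image.
Proof.
  split.
  - exists one. split; [apply (ns1 (killed_normal E'))|apply hom1].
  - intros x y [w1 [K1 <-]] [w2 [K2 <-]]. exists (mul w1 w2).
    split; [apply killed_mul; assumption|apply hmulP].
  - intros x [w [Kw <-]]. exists (inv w). split; [apply killed_inv, Kw|apply homV].
  - intros z x [w [Kw <-]]. destruct (pb_proj_surj p f ex z) as [u <-].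
    exists (mul (mul (inv u) w) u). split; [apply (nsJ (killed_normal E')), Kw|].
    rewrite !hmulP, homV. reflexivity.
Qed.

Let pi : hom Q' (quot _ killed_image_normal) := quot_map _ killed_image_normal.

(** An element of [E'] with killed [E]-component and with image in [S] is
    killed: modulo a killed element it lies in [i' N], where (A) applies. *)
Lemma pb_killed_of_fst (w : E') : killed (pb_fst p f w) -> killed_image (pr w) -> killed w.
Proof.
  intros Kw [w0 [Kw0 Hw0]].
  set (u := mul w (inv w0)).
  assert (pr_u : pr u = one) by (unfold u; rewrite hmulP, homV, Hw0; apply mulgV).
  destruct (pb_ker_proj p f ex u pr_u) as [n Hn].
  assert (Ku : killed u).
  { rewrite <- Hn. apply (killed_hom i'), reflects.
    replace (i n) with (pb_fst p f u) by (rewrite <- Hn; reflexivity).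
    unfold u. rewrite hmulP, homV.
    apply killed_mul, killed_inv, (killed_hom (pb_fst p f)); assumption. }
  replace w with (mul u w0) by (unfold u; group_simpl; reflexivity).
  apply killed_mul; assumption.
Qed.

Lemma pb_lift_killed (y : Q') : killed (f y) -> exists w : E', killed (pb_fst p f w) /\ pr w = y.
Proof.
  intro Kfy. destruct (pb_proj_surj p f ex y) as [u Hu].
  rewrite <- Hu, <- pb_square in Kfy. destruct (lifts _ Kfy) as [n Kn].
  exists (mul (inv (i' n)) u). split; [exact Kn|].
  change (mul (inv one) (pr u) = y). rewrite inv1, mul1g. exact Hu.
Qed.

(** [f] maps elements killed modulo [S] to killed elements of [Q], since
    [f] vanishes on [S] after passing to any H-null group. *)
Lemma killed_mod_image (y : Q') : killed (pi y) -> killed (f y).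
Proof.
  intros Ky M Mnull g.
  assert (gS : forall z, killed_image z -> hcomp f g z = one).
  { intros z [w [Kw <-]]. change (g (f (pb_proj p f w)) = one). rewrite <- (pb_square p f w).
    exact (killed_hom (hcomp (pb_fst p f) p) Kw M Mnull g). }
  destruct (quot_lift _ killed_image_normal (hcomp f g) gS) as [g' Hg'].
  simpl in Hg'. rewrite <- Hg'. exact (Ky M Mnull g').
Qed.

(** If [W : H -> E'] has killed [E]-components and [pi o pr o W] is a
    homomorphism, then [W] is a homomorphism modulo killed elements, i.e. a
    homomorphism [H -> P_H E']; this is trivial, so every [W a] is killed. *)
Lemma pb_section_killed (W : H -> E') :
  (forall a, killed (pb_fst p f (W a))) ->
  (forall x y, pi (pr (W (mul x y))) = mul (pi (pr (W x))) (pi (pr (W y)))) ->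
  forall a, killed (W a).
Proof.
  intros KW Wmul a.
  pose proof (nullify_spec E') as HE'.
  unshelve epose (psi := @Hom H (nullify E') (fun a => nullify_map E' (W a)) _).
  { intros x y. cbv beta. rewrite <- hmulP. symmetry. apply (nullification_eq HE').
    apply pb_killed_of_fst.
    - rewrite !hmulP, homV, hmulP.
      apply killed_mul; [apply killed_inv, killed_mul|]; apply KW.
    - apply (quot_map_ker _ killed_image_normal).
      change (pi (pr (mul (inv (mul (W x) (W y))) (W (mul x y)))) = one).
      rewrite !hmulP, !homV, !hmulP, Wmul. apply mulVg. }
  apply (nullification_ker HE'). exact (nullify_null E' psi a).
Qed.

Lemma killed_image_quot_null : null (quot _ killed_image_normal).
Proof.
  intros h a.
  assert (lift_h : forall b, exists w : E', killed (pb_fst p f w) /\ pi (pr w) = h b).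
  { intro b. destruct (quot_map_surj _ killed_image_normal (h b)) as [y Hy]. fold pi in Hy.
    destruct (pb_lift_killed y) as [w [Kw <-]].
    - apply killed_mod_image. change (killed (pi y)). rewrite Hy. apply killed_image_H.
    - exists w. split; assumption. }
  set (W := fun b => proj1_sig (constructive_indefinite_description _ (lift_h b))).
  assert (HW : forall b, killed (pb_fst p f (W b)) /\ pi (pr (W b)) = h b)
    by (intro b; exact (proj2_sig (constructive_indefinite_description _ (lift_h b)))).
  assert (KW : killed (W a)).
  { apply pb_section_killed; [intro b; apply HW|].
    intros x y. rewrite !(proj2 (HW _)). apply hmulP. }
  rewrite <- (proj2 (HW a)). apply (quot_map_ker _ killed_image_normal).
  exists (W a). split; [exact KW|reflexivity].
Qed.

Lemma pb_killed_proj (y : Q') : killed y -> killed_image y.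
Proof. intro Ky. apply (quot_map_ker _ killed_image_normal), Ky, killed_image_quot_null. Qed.

Lemma pb_lifts_killed : lifts_killed i' pr.
Proof.
  intros w Kw. destruct (pb_killed_proj _ Kw) as [w0 [Kw0 Hw0]].
  assert (pr_u : pr (mul w (inv w0)) = one) by (rewrite hmulP, homV, Hw0; apply mulgV).
  destruct (pb_ker_proj p f ex _ pr_u) as [n Hn]. exists n. fold i' in Hn.
  rewrite Hn, invM, invK. group_simpl. exact Kw0.
Qed.
End PullbackKilled.
End Nullification.

Theorem theorem3p2 (H : group) : conditionally_flat (is_nullification H).
Proof.
  intros N E Q i p ex flat Q' f.
  destruct (flat_conditions H flat) as [reflects lifts].
  apply flat_of_conditions.
  - apply (pb_proj_surj p f ex).
  - reflexivity.
  - apply (pb_reflects_killed H f ex reflects).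
  - apply (pb_lifts_killed H f ex reflects lifts).
Qed.
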